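(* Consider the car-following system with state $x=(D,v,v_{\rm L})\in\mathbb{R}^3$: $$\dot D = v_{\rm L}-v,\qquad \dot v = u - p(v),\qquad \dot v_{\rm L} = a_{\rm L}.$$ Here $p$ is locally Lipschitz with $p(v)\ge 0$, and $a_{\rm L}$ is the leader's acceleration, treated as a given exogenous input. The system is driven by the connected cruise controller $$u = k_{\rm d}(x) = A\big(V(D)-v\big) + B\big(W(v_{\rm L})-v\big) + C a_{\rm L}$$ with $A,B\ge 0$ and $C=0$, where $$V(D)=\min\{\kappa(D-D_{\rm st}),v_{\rm max}\}, \qquad W(v_{\rm L})=\min\{v_{\rm L},v_{\rm max}\}.$$ The constants satisfy $\kappa>0$, $v_{\rm max}>0$ and $D_{\rm st}\in\mathbb{R}$. Let $D_{\rm sf}\in\mathbb{R}$ and $T_{\rm h}>0$, and set $\bar\kappa = 1/T_{\rm h}$. Define $$h_{\rm TH}(x) = \bar\kappa(D-D_{\rm sf}) - v, \qquad \mathcal{S}_{\rm TH}=\{x: h_{\rm TH}(x)\ge0\} = \{x: D\ge D_{\rm sf}+T_{\rm h}v\}.$$ Then the closed loop is safe with respect to $\mathcal{S}_{\rm TH}$, in the sense that every solution with $x(0)\in\mathcal{S}_{\rm TH}$ satisfies $x(t)\in\mathcal{S}_{\rm TH}$ for all $t\ge0$, in either of the following two cases: (i) $v(t)\ge 0$ along the solution, $D_{\rm st}\ge D_{\rm sf}$, and $B=\bar\kappa\ge\kappa$; or (ii) there is $\bar v\ge 0$ such that $v(t),v_{\rm L}(t)\in[0,\bar v]$ along the solution,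 $D_{\rm st}>D_{\rm sf}$, $\bar\kappa\ge\kappa$, and $$A \ \ge\ \frac{|\bar\kappa - B|\,\bar v}{\kappa\,(D_{\rm st}-D_{\rm sf})}.$$
   Context: Standing assumption: solutions of the closed loop system exist and are unique for all $t\ge 0$. *)

From Stdlib Require Import Reals.
From Coquelicot Require Import Coquelicot.
Open Scope R_scope.

Definition locally_lipschitz (p : R -> R) : Prop :=
  forall x : R, exists delta : R, exists L : R, 0 < delta /\
    forall y z : R, Rabs (y - x) < delta -> Rabs (z - x) < delta ->
      Rabs (p y - p z) <= L * Rabs (y - z).

Definition Vpol (kappa Dst vmax D : R) : R := Rmin (kappa * (D - Dst)) vmax.
Definition Wpol (vmax vL : R) : R := Rmin vL vmax.

Definition kd (A B C kappa Dst vmax D v vL aL : R) : R :=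
  A * (Vpol kappa Dst vmax D - v) + B * (Wpol vmax vL - v) + C * aL.

Definition hTH (Th Dsf D v : R) : R := (/ Th) * (D - Dsf) - v.

Definition closed_loop_solution (p aL : R -> R) (A B C kappa Dst vmax : R)
    (D v vL : R -> R) : Prop :=
  (forall t, 0 < t -> is_derive D t (vL t - v t)) /\
  (forall t, 0 < t ->
      is_derive v t (kd A B C kappa Dst vmax (D t) (v t) (vL t) (aL t) - p (v t))) /\
  (forall t, 0 < t -> is_derive vL t (aL t)) /\
  filterlim D (at_right 0) (locally (D 0)) /\
  filterlim v (at_right 0) (locally (v 0)) /\
  filterlim vL (at_right 0) (locally (vL 0)).

From Stdlib Require Import Reals Lra Classical.
From Coquelicot Require Import Coquelicot.
Open Scope R_scope.

(* The proof has two independent halves.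
   1. A scalar barrier principle: if h is right-continuous at the initial
      time a, differentiable afterwards, h(a) >= 0, and h' >= 0 at every
      instant where h < 0, then h stays nonnegative.  If h(t) < 0, a
      supremum argument gives a last stretch [s, t] on which h < 0 and
      h(t) < h(s); the mean value theorem on that stretch then forces
      h(t) >= h(s), a contradiction.
   2. A pointwise barrier condition: along the closed loop h_TH has rate
      (vL - v)/Th - (u - p(v)), and in each case (i), (ii) of the theorem
      this rate is nonnegative whenever h_TH < 0.  The key estimate is that
      outside S_TH the range policy lags the speed by kappa (Dst - Dsf).  Local Lipschitzness of p only matters for existence and
   uniqueness of solutions, which the statement takes for granted. *)

Definition continuous_on_segment (h : R -> R) (a b : R) : Prop :=
  forall s, a <= s <= b -> forall eps, 0 < eps ->
    exists delta, 0 < delta /\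
      forall x, a <= x <= b -> Rabs (x - s) < delta -> Rabs (h x - h s) < eps.

Lemma derive_continuity_pt (h : R -> R) (x l : R) :
  is_derive h x l -> continuity_pt h x.
Proof.
  intros Hd. apply continuity_pt_filterlim, (ex_derive_continuous h x).
  exists l; exact Hd.
Qed.

Lemma continuous_on_segment_intro (h : R -> R) (a b : R) :
  filterlim h (at_right a) (locally (h a)) ->
  (forall s, a < s <= b -> continuity_pt h s) ->
  continuous_on_segment h a b.
Proof.
  intros Hright Hinner s Hs eps Heps.
  destruct (Req_dec s a) as [-> | Hsa].
  - destruct (Hright _ (locally_ball (h a) (mkposreal eps Heps))) as [d Hd].
    exists d; split; [apply cond_pos |]. intros x Hx Hxa.
    destruct (Req_dec x a) as [-> | Hne].
    + rewrite Rminus_diag, Rabs_R0. exact Heps.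
    + exact (Hd x Hxa ltac:(lra)).
  - destruct (Hinner s ltac:(lra) eps Heps) as [d [Hd Hclose]].
    exists d; split; [exact Hd |]. intros x Hx Hxs.
    destruct (Req_dec x s) as [-> | Hne].
    + rewrite Rminus_diag, Rabs_R0. exact Heps.
    + apply (Hclose x). split; [split; [exact I | congruence] | exact Hxs].
Qed.

Lemma lub_approx (E : R -> Prop) (m delta : R) :
  is_lub E m -> 0 < delta -> exists x, E x /\ m - delta < x.
Proof.
  intros [_ Hleast] Hdelta. apply NNPP. intros Hnone.
  assert (m <= m - delta); [| lra].
  apply Hleast. intros x Ex. apply Rnot_lt_le. intros Hx.
  apply Hnone. exists x. split; assumption.
Qed.

Lemma last_negative_stretch (h : R -> R) (a t : R) :
  a < t -> continuous_on_segment h a t -> 0 <= h a -> h t < 0 ->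
  exists s, a < s < t /\ h t < h s /\ forall x, s <= x <= t -> h x < 0.
Proof.
  intros Hat Hcont Ha Ht.
  set (E := fun s => a <= s <= t /\ 0 <= h s).
  destruct (completeness E) as [t0 Hlub].
  { exists t. intros s [Hs _]. lra. }
  { exists a. split; [lra | exact Ha]. }
  assert (Hupper : forall x, E x -> x <= t0) by apply Hlub.
  assert (Ht0 : a <= t0 <= t).
  { split; [apply Hupper; split; [lra | exact Ha] |].
    apply Hlub. intros s [Hs _]. lra. }
  set (eps := - h t / 2).
  destruct (Hcont t0 Ht0 eps ltac:(unfold eps; lra)) as [d [Hd Hclose]].
  destruct (lub_approx E t0 d Hlub Hd) as [s1 [Es1 Hs1]].
  assert (Hs1t0 : s1 <= t0) by (apply Hupper; exact Es1).
  destruct Es1 as [Hs1range Hhs1].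
  (* h(t0) is close to the nonnegative value h(s1), so t0 is not t. *)
  assert (Hnear : - eps < h t0).
  { assert (Hc := Hclose s1 Hs1range ltac:(rewrite Rabs_left1; lra)).
    apply Rabs_def2 in Hc. lra. }
  assert (Ht0t : t0 < t).
  { destruct (proj2 Ht0) as [Hlt | Heq]; [exact Hlt |].
    rewrite Heq in Hnear. unfold eps in Hnear. lra. }
  set (m := Rmin d (t - t0)).
  assert (Hm : 0 < m) by (apply Rmin_pos; lra).
  assert (Hmd : m <= d) by apply Rmin_l.
  assert (Hmt : m <= t - t0) by apply Rmin_r.
  exists (t0 + m / 2). split; [lra | split].
  - assert (Hc := Hclose (t0 + m / 2) ltac:(lra) ltac:(rewrite Rabs_right; lra)).
    apply Rabs_def2 in Hc. unfold eps in *. lra.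
  - intros x Hx. apply Rnot_le_lt. intros Hhx.
    assert (x <= t0) by (apply Hupper; split; [lra | exact Hhx]). lra.
Qed.

Lemma nondecreasing_while_negative (h h' : R -> R) (s t : R) :
  s <= t ->
  (forall x, s <= x <= t -> is_derive h x (h' x)) ->
  (forall x, s <= x <= t -> h x < 0 -> 0 <= h' x) ->
  (forall x, s <= x <= t -> h x < 0) ->
  h s <= h t.
Proof.
  intros Hst Hd Hrate Hneg.
  destruct (MVT_gen h s t h') as [c [Hc Hmvt]].
  - intros x Hx. rewrite Rmin_left, Rmax_right in Hx by lra. apply Hd; lra.
  - intros x Hx. rewrite Rmin_left, Rmax_right in Hx by lra.
    apply (derive_continuity_pt h x (h' x)), Hd; lra.
  - rewrite Rmin_left, Rmax_right in Hc by lra.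
    assert (Hslope : 0 <= h' c) by (apply Hrate; [| apply Hneg]; lra).
    assert (0 <= h' c * (t - s)) by (apply Rmult_le_pos; lra).
    lra.
Qed.

Lemma barrier (h h' : R -> R) (a : R) :
  (forall t, a < t -> is_derive h t (h' t)) ->
  (forall t, a < t -> h t < 0 -> 0 <= h' t) ->
  filterlim h (at_right a) (locally (h a)) ->
  0 <= h a ->
  forall t, a <= t -> 0 <= h t.
Proof.
  intros Hd Hrate Hright Ha t Ht.
  apply Rnot_lt_le. intros Hneg.
  assert (Hat : a < t).
  { destruct Ht as [Hlt | Heq]; [exact Hlt | subst; lra]. }
  assert (Hcont : continuous_on_segment h a t).
  { apply continuous_on_segment_intro; [exact Hright |].
    intros s Hs. apply (derive_continuity_pt h s (h' s)), Hd; lra. }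
  destruct (last_negative_stretch h a t Hat Hcont Ha Hneg)
    as [s [Hs [Hlt Hbelow]]].
  assert (h s <= h t); [| lra].
  apply (nondecreasing_while_negative h h'); try lra.
  - intros x Hx. apply Hd; lra.
  - intros x Hx. apply Hrate; lra.
  - exact Hbelow.
Qed.

Definition hTH_rate (Th v vL u pv : R) : R := / Th * (vL - v) - (u - pv).

Lemma hTH_is_derive (Th Dsf : R) (D v : R -> R) (t dD dv : R) :
  is_derive D t dD -> is_derive v t dv ->
  is_derive (fun s => hTH Th Dsf (D s) (v s)) t (/ Th * dD - dv).
Proof.
  intros HD Hv. unfold hTH.
  replace (/ Th * dD - dv) with (minus (/ Th * minus dD zero) dv)
    by (unfold minus, plus, opp, zero; simpl; ring).
  apply (is_derive_minus (fun s => / Th * (D s - Dsf)) v); [| exact Hv].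
  apply is_derive_scal, (is_derive_minus D (fun _ => Dsf)); [exact HD |].
  apply (@is_derive_const R_AbsRing R_NormedModule).
Qed.

Lemma hTH_right_continuous (Th Dsf a : R) (D v : R -> R) :
  filterlim D (at_right a) (locally (D a)) ->
  filterlim v (at_right a) (locally (v a)) ->
  filterlim (fun t => hTH Th Dsf (D t) (v t)) (at_right a)
    (locally (hTH Th Dsf (D a) (v a))).
Proof.
  intros HD Hv. unfold hTH.
  apply (filterlim_comp_2 (fun t => / Th * (D t - Dsf)) (fun t => opp (v t)) Rplus
           (G := locally (/ Th * (D a - Dsf))) (H := locally (opp (v a)))).
  - apply (filterlim_comp_2 (fun _ => / Th) (fun t => D t - Dsf) Rmult
             (G := locally (/ Th)) (H := locally (D a - Dsf)));
      [apply filterlim_const | | apply (filterlim_mult (/ Th) (D a - Dsf))].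
    apply (filterlim_comp_2 D (fun _ => opp Dsf) Rplus
             (G := locally (D a)) (H := locally (opp Dsf)));
      [exact HD | apply filterlim_const | apply (filterlim_plus (D a) (opp Dsf))].
  - eapply filterlim_comp;
      [exact Hv | apply (@filterlim_opp _ R_NormedModule (v a))].
  - apply (filterlim_plus (/ Th * (D a - Dsf)) (opp (v a))).
Qed.

(* Outside S_TH the range policy lags the speed by at least
   kappa (Dst - Dsf): there kappa (D - Dsf) <= (D - Dsf)/Th < v when
   D >= Dsf, and kappa (D - Dsf) <= 0 <= v otherwise, while
   V(D) <= kappa (D - Dst). *)
Lemma range_policy_gap (kappa vmax Dst Dsf Th D v : R) :
  0 <= kappa <= / Th -> 0 <= v -> hTH Th Dsf D v < 0 ->
  Vpol kappa Dst vmax D - v <= - (kappa * (Dst - Dsf)).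
Proof.
  intros [Hk Hkb] Hv Hh. unfold hTH in Hh. unfold Vpol.
  assert (Hlag : kappa * (D - Dsf) <= v).
  { destruct (Rle_lt_dec 0 (D - Dsf)).
    - assert (kappa * (D - Dsf) <= / Th * (D - Dsf))
        by (apply Rmult_le_compat_r; lra).
      lra.
    - assert (kappa * (D - Dsf) <= 0) by nra. lra. }
  pose proof (Rmin_l (kappa * (D - Dst)) vmax). lra.
Qed.

Lemma speed_policy_range (vmax vL vbar : R) :
  0 <= vmax -> 0 <= vL <= vbar -> 0 <= Wpol vmax vL <= vbar.
Proof.
  intros Hvmax HvL. unfold Wpol, Rmin. destruct (Rle_dec vL vmax); lra.
Qed.

(* Case (i), B = 1/Th and Dsf <= Dst: the rate equals
   (vL - W(vL))/Th - A (V(D) - v) + p(v), a sum of nonnegative terms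
   outside S_TH. *)
Lemma safety_rate_case_i (A kappa vmax Dst Dsf Th D v vL aL pv : R) :
  0 <= A -> 0 <= kappa <= / Th -> Dsf <= Dst -> 0 <= v -> 0 <= pv ->
  hTH Th Dsf D v < 0 ->
  0 <= hTH_rate Th v vL (kd A (/ Th) 0 kappa Dst vmax D v vL aL) pv.
Proof.
  intros HA Hk HDst Hv Hpv Hh.
  pose proof (range_policy_gap kappa vmax Dst Dsf Th D v Hk Hv Hh) as Hgap.
  assert (Hrange : A * (Vpol kappa Dst vmax D - v) <= 0).
  { assert (0 <= kappa * (Dst - Dsf)) by (apply Rmult_le_pos; lra). nra. }
  assert (Hspeed : 0 <= / Th * (vL - Wpol vmax vL)).
  { apply Rmult_le_pos; [lra |]. unfold Wpol. pose proof (Rmin_l vL vmax). lra. }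
  unfold hTH_rate, kd. lra.
Qed.

(* Case (ii), speeds in [0, vbar]: the rate equals
   (vL - W)/Th + (1/Th - B)(W - v) - A (V - v) + p(v); the mismatch term is
   at least -|1/Th - B| vbar, which the range term A kappa (Dst - Dsf)
   dominates by the gain condition. *)
Lemma safety_rate_case_ii (A B kappa vmax Dst Dsf Th D v vL aL pv vbar : R) :
  0 <= A -> 0 <= kappa <= / Th -> 0 <= vmax ->
  0 <= v <= vbar -> 0 <= vL <= vbar -> 0 <= pv ->
  Rabs (/ Th - B) * vbar <= A * (kappa * (Dst - Dsf)) ->
  hTH Th Dsf D v < 0 ->
  0 <= hTH_rate Th v vL (kd A B 0 kappa Dst vmax D v vL aL) pv.
Proof.
  intros HA Hk Hvmax Hv HvL Hpv Hgain Hh.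
  pose proof (range_policy_gap kappa vmax Dst Dsf Th D v Hk (proj1 Hv) Hh)
    as Hgap.
  assert (Hrange : A * (Vpol kappa Dst vmax D - v)
                   <= - (A * (kappa * (Dst - Dsf)))).
  { apply (Rmult_le_compat_l A) in Hgap; lra. }
  pose proof (speed_policy_range vmax vL vbar Hvmax HvL) as HW.
  assert (Hmismatch : - (Rabs (/ Th - B) * vbar)
                      <= (/ Th - B) * (Wpol vmax vL - v)).
  { pose proof (Rle_abs (- ((/ Th - B) * (Wpol vmax vL - v)))) as Habs.
    rewrite Rabs_Ropp, Rabs_mult in Habs.
    assert (Rabs (/ Th - B) * Rabs (Wpol vmax vL - v) <= Rabs (/ Th - B) * vbar).
    { apply Rmult_le_compat_l; [apply Rabs_pos | apply Rabs_le; lra]. }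
    lra. }
  assert (Hspeed : 0 <= / Th * (vL - Wpol vmax vL)).
  { apply Rmult_le_pos; [lra |]. unfold Wpol. pose proof (Rmin_l vL vmax). lra. }
  unfold hTH_rate, kd. lra.
Qed.

Theorem theorem3
  (p aL : R -> R) (A B C kappa vmax Dst Dsf Th : R) (D v vL : R -> R) :
  locally_lipschitz p -> (forall s, 0 <= p s) ->
  0 <= A -> 0 <= B -> C = 0 ->
  0 < kappa -> 0 < vmax -> 0 < Th ->
  closed_loop_solution p aL A B C kappa Dst vmax D v vL ->
  ( ( (forall t, 0 <= t -> 0 <= v t) /\ Dsf <= Dst /\ B = / Th /\ kappa <= / Th )
    \/
    ( exists vbar : R, 0 <= vbar /\
        (forall t, 0 <= t -> 0 <= v t <= vbar /\ 0 <= vL t <= vbar) /\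
        Dsf < Dst /\ kappa <= / Th /\
        Rabs (/ Th - B) * vbar / (kappa * (Dst - Dsf)) <= A ) ) ->
  0 <= hTH Th Dsf (D 0) (v 0) ->
  forall t, 0 <= t -> 0 <= hTH Th Dsf (D t) (v t).
Proof.
  intros _ Hp HA _ HC Hk Hvmax _ [HD [Hv [_ [HD0 [Hv0 _]]]]] Hcases Hsafe0.
  subst C.
  apply (barrier (fun t => hTH Th Dsf (D t) (v t))
    (fun t => hTH_rate Th (v t) (vL t)
                (kd A B 0 kappa Dst vmax (D t) (v t) (vL t) (aL t)) (p (v t)))).
  - intros t Ht. apply (hTH_is_derive Th Dsf D v); [apply HD | apply Hv]; exact Ht.
  - intros t Ht Hunsafe.
    destruct Hcases as [[Hvpos [HDst [HBTh Hkk]]]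
                       | [vbar [_ [Hbounds [HDst [Hkk Hgain]]]]]].
    + subst B. apply (safety_rate_case_i A kappa vmax Dst Dsf Th);
        [exact HA | lra | exact HDst | apply Hvpos; lra | apply Hp | exact Hunsafe].
    + destruct (Hbounds t ltac:(lra)) as [Hvt HvLt].
      apply (safety_rate_case_ii A B kappa vmax Dst Dsf Th _ _ _ _ _ vbar);
        [exact HA | lra | lra | exact Hvt | exact HvLt | apply Hp | | exact Hunsafe].
      apply Rle_div_l; [apply Rmult_lt_0_compat; lra | exact Hgain].
  - apply hTH_right_continuous; assumption.
  - exact Hsafe0.
Qed.
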